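(* Let $G$ be a reaction network with one-dimensional stoichiometric subspace and let $c^*$ be a total-constant vector. If for a rate-constant vector $\kappa^*$, $G$ has a positive steady state in $\mathcal P_{c^*}$, then: (1) for every $z\in I$, $\phi(\hat\kappa;x_1)$ is well-defined at $z$; (2) for every $k\in\mathcal H\setminus\{\tau\}$, $Y_k(-B_\tau/A_\tau)>0$ (here $-B_\tau/A_\tau$ is the left endpoint of $I$); (3) $\phi(\hat\kappa;x_1)$ is well-defined at the left endpoint of $I$.
   Context: A reaction network $G$ has species $X_1,\dots,X_s$ and $m$ reactions $\sum_{i}\alpha_{ij}X_i\to\sum_i\beta_{ij}X_i$, $\alpha_{ij},\beta_{ij}\in\mathbb Z_{\ge0}$, $(\alpha_{1j},\dots,\alpha_{sj})\neq(\beta_{1j},\dots,\beta_{sj})$. $\mathcal N$ has entries $\beta_{ij}-\alpha_{ij}$, $S=\mathrm{im}\,\mathcal N$. For $\kappa\in\mathbb R^m_{>0}$, $f(\kappa;x)=\mathcal N(\kappa_1\prod_i x_i^{\alpha_{i1}},\dots,\kappa_m\prod_i x_i^{\alpha_{im}})^\top$. Since $S$ is one-dimensional, species are labelled so that $\beta_{11}-\alpha_{11}\ne0$, and there are $\lambda_j\ne0$ ($\lambda_1=1$) with $\beta_{ij}-\alpha_{ij}=\lambda_j(\beta_{i1}-\alpha_{i1})$. For $c\in\mathbb R^{s-1}$, $\mathcal P_c=\{x\in\mathbb R^s_{\ge0}:(\beta_{i1}-\alpha_{i1})x_1-(\beta_{11}-\alpha_{11})x_i=c_{i-1},\ i=2,\dots,s\}$.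 A positive steady state is $x\in\mathbb R^s_{>0}$ with $f(\kappa;x)=0$. Notation for $c^*$: $A_1=1,B_1=0$, $A_i=\frac{\beta_{i1}-\alpha_{i1}}{\beta_{11}-\alpha_{11}}$, $B_i=-\frac{c^*_{i-1}}{\beta_{11}-\alpha_{11}}$ ($i\ge2$). $[i]=\{k:A_k\ne0,B_k/A_k=B_i/A_i\}$ if $A_i\ne0$, $[i]=\{k:A_k=0\}$ otherwise; species labelled so that $1,\dots,r$ represent the $r$ distinct classes. $\varphi_k=\min_j\sum_{i\in[k]}\alpha_{ij}$, $\gamma_{kj}=\sum_{i\in[k]}\alpha_{ij}-\varphi_k$. $\mathcal J=\{i:A_i\ne0\}$, $\mathcal H=\{k\in\{1,\dots,r\}\cap\mathcal J:\gamma_{k1},\dots,\gamma_{km}\text{ not all equal}\}$. Standing assumption: if for some rate constants $G$ has $N$ positive steady states in $\mathcal P_{c^*}$ with $0<N<\infty$, species are labelled so that $1\in\mathcal H$. $I_i=(-B_i/A_i,+\infty)$ if $A_i>0$, $(0,+\infty)$ if $A_i=0$, $(0,-B_i/A_i)$ if $A_i<0$; $I=\bigcap_{k\in\mathcal H}I_k$; $\tau$ is the index in $\mathcal H$ with $A_\tau>0$ such that $-B_\tau/A_\tau$ is the left endpoint of $I$. $Y_i(x_1)=(A_ix_1+B_i)/|A_i|$ if $i\in\mathcal J$, $1$ otherwise; $\mathcal C_j=\prod_{i\in\mathcal J}|A_i|^{\alpha_{ij}}\prod_{i\notin\mathcal J}B_i^{\alpha_{ij}}$; $P_j(x_1)=\mathcal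 C_j\prod_{k\in\mathcal H}Y_k(x_1)^{\gamma_{kj}}$; $\ell$ is an index $j$ minimizing $\gamma_{\tau j}$; $\hat\kappa=(\kappa_1,\dots,\kappa_{\ell-1},\kappa_{\ell+1},\dots,\kappa_m)$ and $\phi(\hat\kappa;x_1)=-\frac{\sum_{j\neq\ell}\lambda_j\kappa_jP_j(x_1)}{\lambda_\ell P_\ell(x_1)}$; $\phi$ is well-defined at $z$ if $P_\ell(z)\neq0$. *)

From HB Require Import structures.
From mathcomp Require Import all_boot all_order all_algebra.
Set Implicit Arguments. Unset Strict Implicit. Unset Printing Implicit Defensive.
Import Order.TTheory GRing.Theory Num.Theory.
Local Open Scope ring_scope.

(* Conventions: species X_1..X_s are indexed by 'I_(s.+1) (so there are s.+1
   species; X_1 is ord0), reactions 1..m by 'I_(m.+1) (reaction 1 is ord0).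
   The total-constant vector c has s components (c_1..c_{s}, indexed by 'I_s),
   c_{i-1} being attached to species i >= 2, i.e. species (lift ord0 i'). *)

Section ReactionNetwork.
Variables (R : realFieldType) (s m : nat).
Variables (alpha beta : 'I_s.+1 -> 'I_m.+1 -> nat).

Definition Nst (i : 'I_s.+1) (j : 'I_m.+1) : R := (beta i j)%:R - (alpha i j)%:R.
Definition Nmx : 'M[R]_(s.+1, m.+1) := \matrix_(i, j) Nst i j.

Definition fvec (kappa : 'I_m.+1 -> R) (x : 'I_s.+1 -> R) (i : 'I_s.+1) : R :=
  \sum_(j < m.+1) Nst i j * (kappa j * \prod_(i' < s.+1) x i' ^+ alpha i' j).

Definition positive_steady_state (kappa : 'I_m.+1 -> R) (x : 'I_s.+1 -> R) :=
  (forall i, 0 < x i) /\ (forall i, fvec kappa x i = 0).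

Variable c : 'I_s -> R.

Definition in_Pc (x : 'I_s.+1 -> R) :=
  (forall i, 0 <= x i) /\
  (forall i' : 'I_s,
     Nst (lift ord0 i') ord0 * x ord0 - Nst ord0 ord0 * x (lift ord0 i') = c i').

Definition A (i : 'I_s.+1) : R :=
  if i == ord0 then 1 else Nst i ord0 / Nst ord0 ord0.
Definition B (i : 'I_s.+1) : R :=
  if unlift ord0 i is Some i' then - c i' / Nst ord0 ord0 else 0.

Definition cls (i : 'I_s.+1) : {set 'I_s.+1} :=
  if A i != 0 then [set k | (A k != 0) && (B k / A k == B i / A i)]
  else [set k | A k == 0].

Definition classes_represented (r : nat) :=
  [/\ (r <= s.+1)%N,
      (forall i j : 'I_s.+1, (i < r)%N -> (j < r)%N -> i != j -> cls i != cls j)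
    & (forall k : 'I_s.+1, exists2 i : 'I_s.+1, (i < r)%N & k \in cls i)].

Definition varphi (k : 'I_s.+1) : nat :=
  \big[minn/(\sum_(i in cls k) alpha i ord0)%N]_(j < m.+1) (\sum_(i in cls k) alpha i j)%N.
Definition gam (k : 'I_s.+1) (j : 'I_m.+1) : nat :=
  ((\sum_(i in cls k) alpha i j) - varphi k)%N.

Definition inJ (i : 'I_s.+1) : bool := A i != 0.

Definition Hset (r : nat) : {set 'I_s.+1} :=
  [set k : 'I_s.+1 | [&& (k < r)%N, inJ k &
                       [exists j, exists j', gam k j != gam k j']]].

Definition Iint (i : 'I_s.+1) (z : R) : bool :=
  if 0 < A i then - B i / A i < z
  else if A i == 0 then 0 < z
  else (0 < z) && (z < - B i / A i).

Definition inI (r : nat) (z : R) : Prop := forall k, k \in Hset r -> Iint k z.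

Definition is_left_endpoint (S : R -> Prop) (e : R) :=
  (forall z, S z -> e <= z) /\
  (forall e', (forall z, S z -> e' <= z) -> e' <= e).

Definition Y (i : 'I_s.+1) (x : R) : R :=
  if inJ i then (A i * x + B i) / `|A i| else 1.

Definition Cc (j : 'I_m.+1) : R :=
  (\prod_(i | inJ i) `|A i| ^+ alpha i j) * (\prod_(i | ~~ inJ i) B i ^+ alpha i j).

Definition Ppoly (r : nat) (j : 'I_m.+1) (x : R) : R :=
  Cc j * \prod_(k in Hset r) Y k x ^+ gam k j.

Definition phi_well_defined (r : nat) (ell : 'I_m.+1) (z : R) : Prop :=
  Ppoly r ell z != 0.

End ReactionNetwork.

From Pilot Require Import Defs.
From HB Require Import structures.
From mathcomp Require Import all_boot all_order all_algebra.
From mathcomp Require Import ring.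
Set Implicit Arguments. Unset Strict Implicit. Unset Printing Implicit Defensive.
Import Order.TTheory GRing.Theory Num.Theory.
Local Open Scope ring_scope.

(* A point x of P_c lies on the line x_i = A_i x_1 + B_i, so a positive steady
   state makes every A_i x_1 + B_i positive: B_i > 0 off J (hence C_j > 0) and
   x_1 lies in I.  For z in I every factor Y_k(z), k in H, is positive.  At the
   left endpoint e = -B_tau/A_tau only Y_tau vanishes: for k in H with k <> tau
   the root -B_k/A_k differs from e (k and tau represent distinct classes), and
   it lies strictly on the correct side of e because I is nonempty.  Finally
   gamma_{tau ell} = 0 since the minimum defining varphi_tau is attained, so the
   vanishing factor of P_ell enters with exponent 0. *)

Section AffineSign.
Variable R : realFieldType.

Lemma affine_gt0_pos (a b z : R) : 0 < a -> (0 < a * z + b) = (- b / a < z).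
Proof.
move=> a_gt0; have a_neq0 : a != 0 by rewrite gt_eqF.
have -> : a * z + b = a * (z - - b / a) by field.
by rewrite pmulr_rgt0 // subr_gt0.
Qed.

Lemma affine_gt0_neg (a b z : R) : a < 0 -> (0 < a * z + b) = (z < - b / a).
Proof.
move=> a_lt0; have a_neq0 : a != 0 by rewrite lt_eqF.
have -> : a * z + b = a * (z - - b / a) by field.
by rewrite nmulr_rgt0 // subr_lt0.
Qed.

End AffineSign.

Section OneDimensionalNetwork.
Variables (R : realFieldType) (s m : nat) (alpha beta : 'I_s.+1 -> 'I_m.+1 -> nat).
Variable c : 'I_s -> R.

Local Notation A := (A R alpha beta).
Local Notation B := (B alpha beta c).
Local Notation inJ := (inJ R alpha beta).
Local Notation Iint := (Iint alpha beta c).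
Local Notation inI := (inI alpha beta c).
Local Notation Y := (Y alpha beta c).
Local Notation Hset := (Hset alpha beta c).
Local Notation gam := (gam alpha beta c).
Local Notation cls := (cls alpha beta c).

Lemma in_Pc_affine x : Nst R alpha beta ord0 ord0 != 0 ->
  in_Pc alpha beta c x -> forall i, x i = A i * x ord0 + B i.
Proof.
move=> N00_neq0 [_ x_line] i; rewrite /Defs.A /Defs.B.
case: (unliftP ord0 i) => [i'|] ->; last by rewrite eqxx mul1r addr0.
by rewrite eq_sym (negbTE (neq_lift _ _)) -(x_line i'); field.
Qed.

Lemma mem_Hset r k : k \in Hset r -> (k < r)%N /\ inJ k.
Proof. by rewrite inE => /and3P[]. Qed.

Lemma Y_gt0E k z : inJ k -> (0 < Y k z) = (0 < A k * z + B k).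
Proof. by move=> kJ; rewrite /Defs.Y kJ pmulr_lgt0 // invr_gt0 normr_gt0. Qed.

Lemma Iint_affine_gt0 k z : inJ k -> Iint k z -> 0 < A k * z + B k.
Proof.
rewrite /Defs.Iint /inJ => kJ; rewrite (negbTE kJ).
case: ltgtP kJ => // [A_gt0 _|A_lt0 _ /andP[_]].
- by rewrite affine_gt0_pos.
- by rewrite affine_gt0_neg.
Qed.

Lemma affine_gt0_Iint k z : 0 < z -> 0 < A k * z + B k -> Iint k z.
Proof.
rewrite /Defs.Iint => z_gt0 affine_gt0; case: ltgtP => [A_gt0|A_lt0|//].
- by rewrite -affine_gt0_pos.
- by rewrite z_gt0 -affine_gt0_neg.
Qed.

Lemma root_neq_of_cls_neq k l : inJ k -> inJ l -> cls k != cls l ->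
  - B k / A k != - B l / A l.
Proof.
rewrite /Defs.inJ => kJ lJ; apply: contra.
rewrite !mulNr => /eqP/oppr_inj roots_eq.
by rewrite /Defs.cls kJ lJ roots_eq.
Qed.

Lemma Y_gt0_at_left_endpoint r k e z0 : k \in Hset r ->
  is_left_endpoint (inI r) e -> inI r z0 -> - B k / A k != e -> 0 < Y k e.
Proof.
move=> kH [e_lb e_glb] z0I root_neq_e; have [_ kJ] := mem_Hset kH.
rewrite Y_gt0E //; have := kJ; rewrite /inJ.
case: (ltgtP (A k) 0) => // [A_lt0|A_gt0] _.
- rewrite affine_gt0_neg //; apply: le_lt_trans (e_lb _ z0I) _.
  by have := z0I k kH; rewrite /Defs.Iint ltNge (ltW A_lt0) lt_eqF // => /andP[].
- rewrite affine_gt0_pos // lt_neqAle root_neq_e /=.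
  by apply: e_glb => z zI; have := zI k kH; rewrite /Defs.Iint A_gt0 => /ltW.
Qed.

Lemma varphi_attained k :
  exists j, varphi alpha beta c k = (\sum_(i in cls k) alpha i j)%N.
Proof.
apply: (big_ind (fun v => exists j, v = \sum_(i in cls k) alpha i j)%N).
- by exists ord0.
- by move=> _ _ [j1 ->] [j2 ->]; rewrite /minn; case: ifP; eexists.
- by move=> j _; exists j.
Qed.

Lemma gam_argmin_eq0 k l : (forall j, gam k l <= gam k j)%N -> gam k l = 0%N.
Proof.
move=> l_min; have [j varphi_j] := varphi_attained k.
by apply/eqP; rewrite -leqn0 (leq_trans (l_min j)) // /Defs.gam -varphi_j subnn.
Qed.

Lemma Ppoly_gt0 r j z : 0 < Cc alpha beta c j ->
  (forall k, k \in Hset r -> (0 < gam k j)%N -> 0 < Y k z) ->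
  0 < Ppoly alpha beta c r j z.
Proof.
move=> Cc_gt0 Y_gt0; rewrite /Ppoly mulr_gt0 //; apply: prodr_gt0 => k kH.
by case: (posnP (gam k j)) => [->|gam_gt0]; rewrite ?expr0 ?exprn_gt0 ?Y_gt0.
Qed.

Section SteadyState.
Variables (x : 'I_s.+1 -> R) (kappa : 'I_m.+1 -> R).
Hypothesis N00_neq0 : Nst R alpha beta ord0 ord0 != 0.
Hypothesis x_in_Pc : in_Pc alpha beta c x.
Hypothesis x_steady : positive_steady_state alpha beta kappa x.

Lemma steady_state_affine_gt0 i : 0 < A i * x ord0 + B i.
Proof. by rewrite -in_Pc_affine //; case: x_steady. Qed.

Lemma steady_state_Cc_gt0 j : 0 < Cc alpha beta c j.
Proof.
rewrite /Cc mulr_gt0 //; apply: prodr_gt0 => i iJ; apply: exprn_gt0.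
  by rewrite normr_gt0.
move: iJ (steady_state_affine_gt0 i); rewrite negbK => /eqP->.
by rewrite mul0r add0r.
Qed.

Lemma steady_state_inI r : inI r (x ord0).
Proof.
move=> k _; apply: affine_gt0_Iint (steady_state_affine_gt0 k).
by case: x_steady.
Qed.

End SteadyState.
End OneDimensionalNetwork.

Theorem lemma5p12 (R : realFieldType) (s m : nat)
  (alpha beta : 'I_s.+1 -> 'I_m.+1 -> nat) (cstar : 'I_s -> R)
  (r : nat) (tau : 'I_s.+1) (ell : 'I_m.+1) (kstar : 'I_m.+1 -> R) :
  (* reactions: reactant and product complexes differ *)
  (forall j, exists i, alpha i j != beta i j) ->
  (* one-dimensional stoichiometric subspace *)
  \rank (Nmx R alpha beta) = 1%N ->
  (* labelling: beta_11 - alpha_11 <> 0 *)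
  Nst R alpha beta ord0 ord0 != 0 ->
  (* species 1..r represent the r distinct classes *)
  classes_represented alpha beta cstar r ->
  (* tau: index in H with A_tau > 0 and -B_tau/A_tau the left endpoint of I *)
  tau \in Hset alpha beta cstar r ->
  0 < A R alpha beta tau ->
  is_left_endpoint (inI alpha beta cstar r)
    (- B alpha beta cstar tau / A R alpha beta tau) ->
  (* ell minimizes gamma_{tau j} *)
  (forall j, (gam alpha beta cstar tau ell <= gam alpha beta cstar tau j)%N) ->
  (* kappa* positive, with a positive steady state in P_{c*} *)
  (forall j, 0 < kstar j) ->
  (exists x, in_Pc alpha beta cstar x /\ positive_steady_state alpha beta kstar x) ->
  [/\ (forall z, inI alpha beta cstar r z -> phi_well_defined alpha beta cstar r ell z),
      (forall k, k \in Hset alpha beta cstar r -> k != tau ->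
         0 < Y alpha beta cstar k (- B alpha beta cstar tau / A R alpha beta tau))
    & phi_well_defined alpha beta cstar r ell (- B alpha beta cstar tau / A R alpha beta tau)].
Proof.
move=> _ _ N00_neq0 [_ cls_neq _] tauH _ e_left ell_min _ [x [xP x_steady]].
have Cc_gt0 := steady_state_Cc_gt0 N00_neq0 xP x_steady.
have x1_in_I := steady_state_inI N00_neq0 xP x_steady (r := r).
have [tau_lt_r tauJ] := mem_Hset tauH.
have Y_gt0_e k : k \in Hset alpha beta cstar r -> k != tau ->
    0 < Y alpha beta cstar k (- B alpha beta cstar tau / A R alpha beta tau).
  move=> kH k_neq_tau; have [k_lt_r kJ] := mem_Hset kH.
  apply: Y_gt0_at_left_endpoint kH e_left x1_in_I _.
  exact/root_neq_of_cls_neq/cls_neq.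
split=> [z zI||]; rewrite ?/phi_well_defined ?gt_eqF //.
- apply: Ppoly_gt0 => // k kH _; have [_ kJ] := mem_Hset kH.
  by rewrite Y_gt0E // Iint_affine_gt0 // zI.
- apply: Ppoly_gt0 => // k kH gam_gt0; apply: Y_gt0_e => //.
  by apply: contraTneq gam_gt0 => ->; rewrite gam_argmin_eq0.
Qed.
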